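(* Let $H\in\mathbb{C}^{2N\times2N}$ be Hermitian and let $\mathbb{K}$ be the kernel of $H_\ominus$. Then $\mathbb{K}$ is $J$-invariant, $\dim\mathbb{K}=2l$ is even, $\mathbb{K}$ admits an orthogonal basis $\mathbf{y}_1,\dots,\mathbf{y}_{2l}$ of nonzero vectors with $J(\mathbf{y}_k)=\mathbf{y}_k$ for all $k$, and $\mathbb{K}$ admits an orthonormal basis of the form $\{\mathbf{k}'_1,\dots,\mathbf{k}'_l,J(\mathbf{k}'_1),\dots,J(\mathbf{k}'_l)\}$. Consequently $\mathbb{C}^{2N}$ has an orthonormal basis of eigenvectors of $H_\ominus$ of the form $\{\mathbf{x}_1,\dots,\mathbf{x}_N,J(\mathbf{x}_1),\dots,J(\mathbf{x}_N)\}$ in which every $\mathbf{x}_j$ has eigenvalue $\le 0$.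
   Context: $\Omega=\begin{pmatrix}0&I_N\\ I_N&0\end{pmatrix}\in\mathbb{C}^{2N\times2N}$. $J:\mathbb{C}^{2N}\to\mathbb{C}^{2N}$ is the antilinear map $J(\mathbf{x})=\Omega\mathbf{x}^*$ ($^*$ = entrywise complex conjugation). For a matrix $M$, $M_\ominus:=\tfrac12(M-\Omega M^{\mathrm T}\Omega)$. $\langle\mathbf{x},\mathbf{y}\rangle=\sum_k x_k^*y_k$. *)

(* Complex numbers C^{2N} are modelled as column vectors
   'cV[R[i]]_(N + N) over the complex numbers R[i] = complex R of an
   arbitrary realType R (i.e. the real numbers), from mathcomp-real-closed. *)
From HB Require Import structures.
From mathcomp Require Import all_boot all_order all_algebra.
From mathcomp Require Import reals complex.
Set Implicit Arguments.
Unset Strict Implicit.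
Unset Printing Implicit Defensive.
Import Order.TTheory GRing.Theory Num.Theory.
Local Open Scope ring_scope.

Section Defs.
Variable C : numClosedFieldType.
Variable N : nat.

Definition Omega : 'M[C]_(N + N) := block_mx 0 1%:M 1%:M 0.

Definition conjv (x : 'cV[C]_(N + N)) : 'cV[C]_(N + N) := map_mx Num.conj x.

Definition Jmap (x : 'cV[C]_(N + N)) : 'cV[C]_(N + N) := Omega *m conjv x.

Definition ominus (M : 'M[C]_(N + N)) : 'M[C]_(N + N) :=
  2^-1 *: (M - Omega *m M^T *m Omega).

Definition dotc (x y : 'cV[C]_(N + N)) : C :=
  \sum_(k < N + N) (x k 0)^* * y k 0.

Definition hermitian_mx (H : 'M[C]_(N + N)) : Prop := (map_mx Num.conj H)^T = H.

Definition in_ker (A : 'M[C]_(N + N)) (x : 'cV[C]_(N + N)) : Prop := A *m x = 0.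

(* the kernel of A, as a row space of transposed (column) vectors:
   its rows span { x^T | A x = 0 }, so its rank is dim ker A *)
Definition kerc (A : 'M[C]_(N + N)) : 'M[C]_(N + N) := kermx A^T.

Definition Jpair (l : nat) (k : 'I_l -> 'cV[C]_(N + N)) (i : 'I_(l + l))
  : 'cV[C]_(N + N) :=
  match split i with inl a => k a | inr b => Jmap (k b) end.

Definition spans (m : nat) (v : 'I_m -> 'cV[C]_(N + N))
  (S : 'cV[C]_(N + N) -> Prop) : Prop :=
  forall x, S x -> exists c : 'I_m -> C, x = \sum_(i < m) c i *: v i.

Definition is_basis (m : nat) (v : 'I_m -> 'cV[C]_(N + N))
  (S : 'cV[C]_(N + N) -> Prop) : Prop :=
  [/\ forall i, S (v i),
      (forall c : 'I_m -> C, \sum_(i < m) c i *: v i = 0 -> forall i, c i = 0)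
    & spans v S].

Definition orthogonal_fam (m : nat) (v : 'I_m -> 'cV[C]_(N + N)) : Prop :=
  forall i j, i != j -> dotc (v i) (v j) = 0.

Definition orthonormal_fam (m : nat) (v : 'I_m -> 'cV[C]_(N + N)) : Prop :=
  forall i j, dotc (v i) (v j) = (i == j)%:R.

End Defs.

From HB Require Import structures.
From mathcomp Require Import all_boot all_order all_algebra.
From mathcomp Require Import reals complex zify.
Import Order.TTheory GRing.Theory Num.Theory.
Local Open Scope ring_scope.
Set Implicit Arguments.
Unset Strict Implicit.
Unset Printing Implicit Defensive.

(* H_ominus is Hermitian and anticommutes with the antiunitary involution J:
   H_ominus (J x) = - J (H_ominus x).  Hence J sends an eigenvector of
   eigenvalue a to one of eigenvalue -a, and the orthogonal complement of a
   J-closed orthonormal family of eigenvectors is stable under H_ominus and J,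
   so it contains a further eigenvector.  We grow such a family greedily:
   an eigenvector x of negative eigenvalue comes with its partner J x (the two
   are orthogonal since their eigenvalues differ); in the kernel, J-stability
   gives a J-fixed unit vector f, and two orthonormal J-fixed kernel vectors
   g, f are replaced by the pair (g + i f)/sqrt 2, (g - i f)/sqrt 2, which
   J exchanges.  At most one J-fixed kernel vector is pending at any time, and
   parity of 2N forces none to be pending at the end.  Finally, the J-fixed
   vectors k + J k and i (k - J k) built from the kernel part of the final
   basis are orthogonal and span the kernel. *)

Section InnerProduct.
Variables (C : numClosedFieldType) (N : nat).
Local Notation V := 'cV[C]_(N + N).
Local Notation dot := (@dotc C N).
Implicit Types x y z : V.

Lemma dotcDr x y z : dot x (y + z) = dot x y + dot x z.
Proof. by rewrite /dotc -big_split; apply: eq_bigr => k _; rewrite mxE mulrDr. Qed.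

Lemma dotcZr x c y : dot x (c *: y) = c * dot x y.
Proof. by rewrite /dotc mulr_sumr; apply: eq_bigr => k _; rewrite mxE mulrCA. Qed.

Lemma dotcDl x y z : dot (x + y) z = dot x z + dot y z.
Proof.
by rewrite /dotc -big_split; apply: eq_bigr => k _; rewrite mxE rmorphD mulrDl.
Qed.

Lemma dotcZl x c y : dot (c *: x) y = c^* * dot x y.
Proof.
by rewrite /dotc mulr_sumr; apply: eq_bigr => k _; rewrite mxE rmorphM mulrA.
Qed.

Lemma dotcC x y : dot y x = (dot x y)^*.
Proof.
by rewrite /dotc rmorph_sum; apply: eq_bigr => k _; rewrite rmorphM /= conjCK mulrC.
Qed.

Lemma dotc0r x : dot x 0 = 0.
Proof. by rewrite /dotc big1 // => k _; rewrite mxE mulr0. Qed.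

Lemma dotcNr x y : dot x (- y) = - dot x y.
Proof. by rewrite -scaleN1r dotcZr mulN1r. Qed.

Lemma dotcNl x y : dot (- x) y = - dot x y.
Proof. by rewrite -scaleN1r dotcZl rmorphN1 mulN1r. Qed.

Lemma dotcBr x y z : dot x (y - z) = dot x y - dot x z.
Proof. by rewrite dotcDr dotcNr. Qed.

Lemma dotc_sumr I (r : seq I) (P : pred I) x (f : I -> V) :
  dot x (\sum_(i <- r | P i) f i) = \sum_(i <- r | P i) dot x (f i).
Proof. exact: (big_morph _ (dotcDr x) (dotc0r x)). Qed.

Lemma dotc_ge0 x : 0 <= dot x x.
Proof. by apply: sumr_ge0 => k _; rewrite mulrC mul_conjC_ge0. Qed.

Lemma dotc_eq0 x : (dot x x == 0) = (x == 0).
Proof.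
apply/idP/idP => [|/eqP->]; last by rewrite dotc0r.
rewrite psumr_eq0 => [/allP x0|k _]; last by rewrite mulrC mul_conjC_ge0.
apply/eqP/matrixP => i j; rewrite ord1 mxE.
by have := x0 i (mem_index_enum _); rewrite mulrC mul_conjC_eq0 => /eqP.
Qed.

Lemma dotc_mulmx (M : 'M[C]_(N + N)) x y :
  dot (M *m x) y = dot x ((map_mx Num.conj M)^T *m y).
Proof.
rewrite /dotc.
under eq_bigr do rewrite !mxE rmorph_sum mulr_suml.
under [RHS]eq_bigr do rewrite !mxE mulr_sumr.
rewrite exchange_big; apply: eq_bigr => i _; apply: eq_bigr => j _.
by rewrite !mxE rmorphM mulrA [_ * _^*]mulrC.
Qed.

Lemma dotc_hermitian (A : 'M[C]_(N + N)) x y :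
  hermitian_mx A -> dot (A *m x) y = dot x (A *m y).
Proof. by move=> hA; rewrite dotc_mulmx hA. Qed.

Lemma hermitian_eigen_conj (A : 'M[C]_(N + N)) z a :
  hermitian_mx A -> z != 0 -> A *m z = a *: z -> a^* = a.
Proof.
move=> hA nz Az; have := dotc_hermitian z z hA; rewrite Az dotcZl dotcZr => /eqP.
by rewrite -subr_eq0 -mulrBl mulf_eq0 dotc_eq0 (negPf nz) orbF subr_eq0 => /eqP.
Qed.

Lemma hermitian_eigen_ker_orth (A : 'M[C]_(N + N)) u y a :
  hermitian_mx A -> A *m u = a *: u -> a != 0 -> A *m y = 0 -> dot u y = 0.
Proof.
move=> hA Au a0 Ay; have := dotc_hermitian u y hA; rewrite Au Ay dotcZl dotc0r.
by move/eqP; rewrite mulf_eq0 conjC_eq0 (negPf a0) => /eqP.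
Qed.

End InnerProduct.

Section Conjugation.
Variables (C : numClosedFieldType) (N : nat).
Local Notation V := 'cV[C]_(N + N).
Local Notation Om := (Omega C N).
Local Notation J := (@Jmap C N).
Local Notation dot := (@dotc C N).
Implicit Types x y : V.

Lemma trmx_Omega : Om^T = Om.
Proof. by rewrite /Omega tr_block_mx !trmx0 !trmx1. Qed.

Lemma conj_Omega : map_mx Num.conj Om = Om.
Proof.
rewrite /Omega map_block_mx map_mx0.
suff -> : map_mx Num.conj (1%:M : 'M[C]_N) = 1%:M by [].
by apply/matrixP => i j; rewrite !mxE; case: (i == j); rewrite ?conjC1 ?conjC0.
Qed.

Lemma mulmx_OmegaK : Om *m Om = 1%:M.
Proof.
rewrite /Omega mulmx_block !mulmx0 !mul0mx !mulmx1 !addr0 !add0r.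
by rewrite -scalar_mx_block.
Qed.

Lemma JmapD x y : J (x + y) = J x + J y.
Proof. by rewrite /Jmap /conjv map_mxD mulmxDr. Qed.

Lemma JmapZ c x : J (c *: x) = c^* *: J x.
Proof. by rewrite /Jmap /conjv map_mxZ scalemxAr. Qed.

Lemma JmapB x y : J (x - y) = J x - J y.
Proof. by rewrite JmapD -scaleN1r JmapZ rmorphN1 scaleN1r. Qed.

Lemma Jmap0 : J 0 = 0.
Proof. by rewrite /Jmap /conjv map_mx0 mulmx0. Qed.

Lemma JmapK x : J (J x) = x.
Proof.
rewrite /Jmap /conjv map_mxM conj_Omega mulmxA mulmx_OmegaK mul1mx.
by apply/matrixP => i j; rewrite !mxE /= conjCK.
Qed.

Lemma Jmap_eq0 x : (J x == 0) = (x == 0).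
Proof. by apply/eqP/eqP => [x0|->]; rewrite ?Jmap0 // -(JmapK x) x0 Jmap0. Qed.

Lemma dotc_Jmap x y : dot (J x) (J y) = dot y x.
Proof.
rewrite /Jmap dotc_mulmx conj_Omega trmx_Omega mulmxA mulmx_OmegaK mul1mx.
by rewrite /dotc; apply: eq_bigr => k _; rewrite !mxE conjCK mulrC.
Qed.

End Conjugation.

Section OminusJmap.
Variables (C : numClosedFieldType) (N : nat) (H : 'M[C]_(N + N)).
Hypothesis hH : hermitian_mx H.
Local Notation Om := (Omega C N).
Local Notation J := (@Jmap C N).

Lemma conj_ominus : map_mx Num.conj (ominus H) = 2^-1 *: (H^T - Om *m H *m Om).
Proof.
have conjH : map_mx Num.conj H = H^T by rewrite -[in RHS]hH trmxK.
have conj_half : (2^-1 : C)^* = 2^-1 by rewrite fmorphV /= conj_Creal // realn.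
rewrite /ominus map_mxZ map_mxB !map_mxM conj_Omega -map_trmx conjH trmxK.
by rewrite -[X in X *: _ = _]/((2^-1 : C)^*) conj_half.
Qed.

Lemma hermitian_ominus : hermitian_mx (ominus H).
Proof.
rewrite /hermitian_mx conj_ominus linearZ /= linearB /= !trmx_mul trmx_Omega trmxK.
by rewrite /ominus mulmxA.
Qed.

Lemma ominus_Jmap x : ominus H *m J x = - J (ominus H *m x).
Proof.
have anticomm : ominus H *m Om = - (Om *m map_mx Num.conj (ominus H)).
  rewrite conj_ominus /ominus -scalemxAl -scalemxAr -scalerN; congr (_ *: _).
  rewrite mulmxBl mulmxBr opprB -!mulmxA mulmx_OmegaK mulmx1.
  by rewrite !mulmxA mulmx_OmegaK mul1mx.
by rewrite /Jmap /conjv mulmxA anticomm map_mxM mulNmx mulmxA.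
Qed.

Lemma ominus_Jmap_eigen x a :
  ominus H *m x = a *: x -> ominus H *m J x = (- a^*) *: J x.
Proof. by move=> Ax; rewrite ominus_Jmap Ax JmapZ scaleNr. Qed.

Lemma ker_ominus_Jmap x : in_ker (ominus H) x -> in_ker (ominus H) (J x).
Proof. by rewrite /in_ker ominus_Jmap => ->; rewrite Jmap0 oppr0. Qed.

End OminusJmap.

Section OrthonormalFamilies.
Variables (C : numClosedFieldType) (N : nat).
Local Notation V := 'cV[C]_(N + N).
Local Notation dot := (@dotc C N).
Implicit Types x y z : V.

Definition conj_rows_mx m (v : 'I_m -> V) : 'M[C]_(m, N + N) :=
  \matrix_(i, j) ((v i) j 0)^*.

Lemma orthonormal_fam_unitary m (v : 'I_m -> V) :
  orthonormal_fam v -> conj_rows_mx v \is unitarymx.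
Proof.
move=> ov; apply/unitarymxP/matrixP => i k; rewrite !mxE -ov /dotc.
by apply: eq_bigr => j _; rewrite !mxE /= conjCK.
Qed.

Lemma orthonormal_fam_size m (v : 'I_m -> V) : orthonormal_fam v -> (m <= N + N)%N.
Proof. by move=> /orthonormal_fam_unitary/mxrank_unitary <-; exact: rank_leq_col. Qed.

Lemma orthonormal_fam_expand (v : 'I_(N + N) -> V) :
  orthonormal_fam v -> forall x, x = \sum_(i < N + N) dot (v i) x *: v i.
Proof.
move=> /orthonormal_fam_unitary/unitarymxP/mulmx1C vv x.
have vv' j j' : \sum_(i < N + N) v i j 0 * (v i j' 0)^* = (j == j')%:R.
  have := congr1 (fun M : 'M[C]_(N + N) => M j j') vv; rewrite /= !mxE => <-.
  by apply: eq_bigr => i _; rewrite !mxE /= conjCK.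
apply/matrixP => j k; rewrite ord1 summxE.
have -> : x j 0 =
    \sum_(j' < N + N) (\sum_(i < N + N) v i j 0 * (v i j' 0)^*) * x j' 0.
  under eq_bigr do rewrite vv'.
  rewrite (bigD1 j) //= big1 => [|j' /negPf nj]; first by rewrite eqxx mul1r addr0.
  by rewrite eq_sym nj mul0r.
under eq_bigr do rewrite mulr_suml.
rewrite exchange_big; apply: eq_bigr => i _.
rewrite mxE /dotc mulr_suml; apply: eq_bigr => j' _.
by rewrite [RHS]mulrC mulrA.
Qed.

Lemma orthogonal_fam_free m (v : 'I_m -> V) :
  orthogonal_fam v -> (forall i, v i != 0) ->
  forall c : 'I_m -> C, \sum_(i < m) c i *: v i = 0 -> forall i, c i = 0.
Proof.
move=> ov nz c vc0 i.
have := congr1 (dot (v i)) vc0; rewrite dotc0r dotc_sumr (bigD1 i) //= big1.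
  rewrite addr0 dotcZr => /eqP.
  by rewrite mulf_eq0 dotc_eq0 (negPf (nz i)) orbF => /eqP.
by move=> k nk; rewrite dotcZr ov ?mulr0 // eq_sym.
Qed.

Lemma orthonormal_fam_free m (v : 'I_m -> V) :
  orthonormal_fam v ->
  forall c : 'I_m -> C, \sum_(i < m) c i *: v i = 0 -> forall i, c i = 0.
Proof.
move=> ov; apply: orthogonal_fam_free => [i j nij|i]; first by rewrite ov (negPf nij).
by rewrite -dotc_eq0 ov eqxx oner_eq0.
Qed.

Lemma rank_kerc_orthonormal_basis (A : 'M[C]_(N + N)) m (v : 'I_m -> V) :
  is_basis v (in_ker A) -> orthonormal_fam v -> \rank (kerc A) = m.
Proof.
move=> [vA _ vspan] ov; pose Y : 'M[C]_(m, N + N) := \matrix_(i, j) v i j 0.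
have Yunitary : Y \is unitarymx.
  apply/unitarymxP/matrixP => i j; rewrite !mxE eq_sym -ov /dotc.
  by apply: eq_bigr => k _; rewrite !mxE mulrC.
have rowY i : (v i)^T = row i Y by apply/rowP => j; rewrite !mxE.
rewrite -(mxrank_unitary Yunitary); apply/eqmx_rank/andP; split.
- apply/row_subP => r; set w := row r (kerc A).
  have /sub_kermxP wA : (w <= kermx A^T)%MS by exact: row_sub.
  have wA' : in_ker A w^T by rewrite /in_ker -[A]trmxK -trmx_mul wA trmx0.
  have [c wc] := vspan w^T wA'.
  rewrite -[w]trmxK wc linear_sum /=; apply: summx_sub => t _.
  by rewrite linearZ /= rowY; apply/scalemx_sub/row_sub.
- apply/sub_kermxP/matrixP => i j; rewrite !mxE.
  have := congr1 (fun M : 'cV[C]_(N + N) => M j 0) (vA i); rewrite !mxE => vAij.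
  by rewrite -[RHS]vAij; apply: eq_bigr => k _; rewrite [LHS]mulrC !mxE.
Qed.

End OrthonormalFamilies.

Section OrthonormalSeqs.
Variables (C : numClosedFieldType) (N : nat).
Local Notation V := 'cV[C]_(N + N).
Local Notation J := (@Jmap C N).
Local Notation dot := (@dotc C N).
Implicit Types (x y z w : V) (s t : seq V).

Definition orthonormal s := uniq s /\ {in s &, forall u v, dot u v = (u == v)%:R}.

Definition perp s z := forall u, u \in s -> dot u z = 0.

Lemma perpZ s c z : perp s z -> perp s (c *: z).
Proof. by move=> sz u us; rewrite dotcZr sz // mulr0. Qed.

Lemma perpD s y z : perp s y -> perp s z -> perp s (y + z).
Proof. by move=> sy sz u us; rewrite dotcDr sy // sz // addr0. Qed.

Lemma orthonormal_perm s t : perm_eq s t -> orthonormal s -> orthonormal t.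
Proof.
move=> st [us os]; split; first by rewrite -(perm_uniq st).
by move=> u v; rewrite -!(perm_mem st); exact: os.
Qed.

Lemma orthonormal_cons s z : orthonormal s -> dot z z = 1 -> perp s z ->
  orthonormal (z :: s).
Proof.
move=> [us os] zz sz.
have zNs : z \notin s by apply/negP => /sz; rewrite zz => /eqP; rewrite oner_eq0.
split; first by rewrite /= us zNs.
have neq_z u : u \in s -> (u == z) = false.
  by move=> us'; apply/negbTE; apply: contraNneq zNs => <-.
move=> u v; rewrite !inE => /predU1P[->|us'] /predU1P[->|vs'].
- by rewrite zz eqxx.
- by rewrite dotcC sz // conjC0 eq_sym neq_z.
- by rewrite sz // neq_z.
- exact: os.
Qed.

Lemma orthonormal_cat_perp s t z : orthonormal (s ++ t) -> z \in t -> perp s z.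
Proof.
move=> [ust ost] zt u us; rewrite ost ?mem_cat ?us ?zt ?orbT //.
case: eqP => // uz; move: ust; rewrite cat_uniq => /and3P [_ /hasPn zNs _].
by have := zNs z zt; rewrite -uz us.
Qed.

Lemma orthonormal_subseq s t : subseq s t -> orthonormal t -> orthonormal s.
Proof.
move=> st [ut ot]; split; first exact: subseq_uniq ut.
by move=> u v us vs; apply: ot; apply: (mem_subseq st).
Qed.

Lemma orthonormal_nth s m : size s = m -> orthonormal s ->
  orthonormal_fam (fun i : 'I_m => nth 0 s i).
Proof. by move=> sm [us os] i j; rewrite os ?mem_nth ?nth_uniq ?sm. Qed.

Lemma orthonormal_size s : orthonormal s -> (size s <= N + N)%N.
Proof. by move=> /(orthonormal_nth (erefl _)) /orthonormal_fam_size. Qed.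

Lemma orthonormal_expand s : orthonormal s -> size s = (N + N)%N ->
  forall x, x = \sum_(u <- s) dot u x *: u.
Proof.
move=> os sN x; rewrite {1}(orthonormal_fam_expand (orthonormal_nth sN os) x).
by rewrite (big_nth 0) big_mkord sN.
Qed.

Definition conj_seq_mx s := conj_rows_mx (fun i : 'I_(size s) => nth 0 s i).

Lemma perp_kermxP s (w : 'rV[C]_(N + N)) :
  (w <= kermx (conj_seq_mx s)^T)%MS <-> perp s w^T.
Proof.
have wE i : (w *m (conj_seq_mx s)^T) 0 i = dot (nth 0 s i) w^T.
  by rewrite !mxE /dotc; apply: eq_bigr => j _; rewrite /conj_seq_mx !mxE mulrC.
split => [/sub_kermxP ws u /(nthP 0) [i lti <-]|ws].
  by rewrite -(wE (Ordinal lti)) ws mxE.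
by apply/sub_kermxP/matrixP => k i; rewrite ord1 wE mxE ws // mem_nth.
Qed.

(* The complement of [s] is the row kernel of [(conj_seq_mx s)^T], which is
   [A^T]-stable; an eigenvector of the restriction exists as [C] is closed. *)
Lemma perp_stable_eigenvector (A : 'M[C]_(N + N)) s :
  (forall z, perp s z -> perp s (A *m z)) -> (size s < N + N)%N ->
  exists z a, [/\ z != 0, perp s z & A *m z = a *: z].
Proof.
move=> Astable lts; set S := kermx (conj_seq_mx s)^T.
have S_gt0 : (0 < \rank S)%N.
  by rewrite mxrank_ker mxrank_tr subn_gt0 (leq_ltn_trans (rank_leq_row _) lts).
have stableS : stablemx S A^T.
  apply/row_subP => i; rewrite row_mul; apply/perp_kermxP.
  by rewrite trmx_mul trmxK; apply/Astable/perp_kermxP/row_sub.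
set B := row_base S.
have [a /eigenvalueP [u uE u_nz]] := eigenvalue_closed (conjmx B A^T) S_gt0.
have : (u <= eigenspace (conjmx B A^T) a)%MS by apply/eigenspaceP.
rewrite sub_eigenspace_conjmx ?row_base_free ?stablemx_row_base //.
move=> /eigenspaceP uBE; exists (u *m B)^T, a; split.
- by rewrite trmx_eq0 mulmx_free_eq0 ?row_base_free.
- by apply/perp_kermxP; rewrite (submx_trans (submxMl u B)) ?eq_row_base.
- by rewrite -[A]trmxK -trmx_mul uBE linearZ.
Qed.

Lemma Jfixed_pair g f : J g = g -> J f = f ->
  dot g g = 1 -> dot f f = 1 -> dot g f = 0 ->
  g + 'i *: f != 0 /\ dot (g + 'i *: f) (J (g + 'i *: f)) = 0.
Proof.
move=> Jg Jf gg ff gf; have fg : dot f g = 0 by rewrite dotcC gf conjC0.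
split.
  apply/eqP => w0; have := dotcDr g g ('i *: f).
  by rewrite w0 dotc0r dotcZr gf gg mulr0 addr0 => /esym/eqP; rewrite oner_eq0.
rewrite JmapD JmapZ Jg Jf conjCi !(dotcDl, dotcDr, dotcZl, dotcZr) gg gf fg ff conjCi.
by rewrite !mulr0 !addr0 mulr1 mulrNN mulCii add0r addrN.
Qed.

Definition invnorm w : C := (sqrtC (dot w w))^-1.
Definition normalize w : V := invnorm w *: w.

Lemma conj_invnorm w : (invnorm w)^* = invnorm w.
Proof. by rewrite conj_Creal // realV sqrtC_real // dotc_ge0. Qed.

Lemma dotc_normalize w : w != 0 -> dot (normalize w) (normalize w) = 1.
Proof.
move=> w_nz; rewrite /normalize dotcZl dotcZr conj_invnorm /invnorm.
have r_nz : sqrtC (dot w w) != 0 by rewrite sqrtC_eq0 dotc_eq0.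
by rewrite -{3}(sqrtCK (dot w w)) expr2 mulKf // mulVf.
Qed.

Lemma Jmap_normalize w : J (normalize w) = normalize (J w).
Proof. by rewrite /normalize JmapZ conj_invnorm /invnorm dotc_Jmap. Qed.

End OrthonormalSeqs.

Ltac perm_by_count := apply/permP => ?; rewrite /=; repeat rewrite count_cat /=; lia.

Section Construction.
Variables (C : numClosedFieldType) (N : nat) (H : 'M[C]_(N + N)).
Hypothesis hH : hermitian_mx H.
Local Notation V := 'cV[C]_(N + N).
Local Notation J := (@Jmap C N).
Local Notation dot := (@dotc C N).
Local Notation A := (ominus H).
Implicit Types (x y z w f g : V) (Qn Qk O : seq V).

(* [Qn] holds eigenvectors of negative eigenvalue, [Qk] kernel vectors, and
   [O] at most one J-fixed kernel vector still waiting for a partner. *)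
Definition Jfamily Qn Qk O := Qn ++ map J Qn ++ Qk ++ map J Qk ++ O.

Definition admissible Qn Qk O :=
  [/\ orthonormal (Jfamily Qn Qk O),
      {in Qn, forall x, exists2 lam : C, lam < 0 & A *m x = lam *: x},
      {in Qk, forall x, A *m x = 0},
      {in O, forall x, A *m x = 0 /\ J x = x} &
      (size O <= 1)%N].

Lemma size_Jfamily Qn Qk O :
  size (Jfamily Qn Qk O) = (size Qn + size Qn + size Qk + size Qk + size O)%N.
Proof. by rewrite /Jfamily !size_cat !size_map; lia. Qed.

Section Admissible.
Variables Qn Qk O : seq V.
Hypothesis adm : admissible Qn Qk O.
Local Notation F := (Jfamily Qn Qk O).

Lemma Jfamily_eigen u : u \in F -> exists mu, A *m u = mu *: u.
Proof.
have [_ Qn_neg Qk_ker O_fix _] := adm; rewrite !mem_cat.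
case/orP => [uQ|/orP[/mapP[x xQ ->]|/orP[uQ|/orP[/mapP[x xQ ->]|uO]]]].
- by have [lam _ Au] := Qn_neg u uQ; exists lam.
- by have [lam _ Ax] := Qn_neg x xQ; exists (- lam^*); apply: ominus_Jmap_eigen.
- by exists 0; rewrite scale0r Qk_ker.
- by exists 0; rewrite scale0r ominus_Jmap // Qk_ker // Jmap0 oppr0.
- by exists 0; rewrite scale0r; case: (O_fix u uO).
Qed.

Lemma Jfamily_Jmap u : u \in F -> J u \in F.
Proof.
have [_ _ _ O_fix _] := adm; rewrite !mem_cat.
case/orP => [uQ|/orP[/mapP[x xQ ->]|/orP[uQ|/orP[/mapP[x xQ ->]|uO]]]].
- by rewrite (map_f J uQ) orbT.
- by rewrite JmapK xQ.
- by rewrite (map_f J uQ) !orbT.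
- by rewrite JmapK xQ !orbT.
- by case: (O_fix u uO) => _ ->; rewrite uO !orbT.
Qed.

Lemma perp_Jfamily_stable z : perp F z -> perp F (A *m z) /\ perp F (J z).
Proof.
move=> Fz; split => u uF.
  have [mu Au] := Jfamily_eigen uF.
  by rewrite -(dotc_hermitian u z (hermitian_ominus hH)) Au dotcZl Fz // mulr0.
by rewrite -(JmapK u) dotc_Jmap dotcC Fz ?conjC0 // Jfamily_Jmap.
Qed.

(* Both z + J z and i (z - J z) are J-fixed, and one of them is nonzero. *)
Lemma perp_Jfixed_kernel_vector z : z != 0 -> perp F z -> A *m z = 0 ->
  exists f, [/\ dot f f = 1, J f = f, A *m f = 0 & perp F f].
Proof.
move=> z_nz Fz Az; have FJz : perp F (J z) by case: (perp_Jfamily_stable Fz).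
have AJz : A *m J z = 0 by rewrite ominus_Jmap // Az Jmap0 oppr0.
suff [w [w_nz Jw Aw Fw]] :
    exists w, [/\ w != 0, J w = w, A *m w = 0 & perp F w].
  exists (normalize w); split; first exact: dotc_normalize.
  - by rewrite Jmap_normalize Jw.
  - by rewrite /normalize -scalemxAr Aw scaler0.
  - exact: perpZ.
have [zJz0|zJz_nz] := eqVneq (z + J z) 0; last first.
  exists (z + J z); split => //; last exact: perpD.
  - by rewrite JmapD JmapK addrC.
  - by rewrite mulmxDr Az AJz addr0.
exists ('i *: (z - J z)); split.
- rewrite scaler_eq0 negb_or -normr_eq0 normCi oner_eq0 /=.
  apply: contra_neq z_nz => zJz0'.
  have : (z - J z) + (z + J z) = 0 by rewrite zJz0 zJz0' addr0.
  rewrite addrACA addNr addr0 -mulr2n -scaler_nat => /eqP.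
  by rewrite scaler_eq0 pnatr_eq0 => /eqP.
- by rewrite JmapZ JmapB JmapK conjCi scaleNr -scalerN opprB.
- by rewrite -scalemxAr mulmxBr Az AJz subrr scaler0.
- by apply: perpZ => u uF; rewrite dotcBr Fz // FJz // subr0.
Qed.

End Admissible.

Lemma admissible_push_negative Qn Qk O x b :
  admissible Qn Qk O -> x != 0 -> perp (Jfamily Qn Qk O) x -> b < 0 ->
  A *m x = b *: x -> admissible (normalize x :: Qn) Qk O.
Proof.
move=> adm x_nz Fx b_lt0 Ax; have [oF Qn_neg Qk_ker O_fix O_small] := adm.
have b_real : b^* = b := hermitian_eigen_conj (hermitian_ominus hH) x_nz Ax.
set k := normalize x.
have Ak : A *m k = b *: k by rewrite /k /normalize -scalemxAr Ax !scalerA mulrC.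
have Fk : perp (Jfamily Qn Qk O) k := perpZ _ Fx.
have kk : dot k k = 1 by apply: dotc_normalize.
clearbody k.
have AJk : A *m J k = (- b) *: J k by rewrite (ominus_Jmap_eigen hH Ak) b_real.
have FJk : perp (Jfamily Qn Qk O) (J k) by case: (perp_Jfamily_stable adm Fk).
have Jkk : dot (J k) k = 0.
  have := dotc_hermitian (J k) k (hermitian_ominus hH).
  rewrite AJk Ak dotcZl dotcZr rmorphN /= b_real => /eqP.
  rewrite -subr_eq0 -mulrBl -opprD mulf_eq0 oppr_eq0 => /orP [/eqP bb|/eqP //].
  have : b + b < 0 by rewrite -[0]addr0 ltrD.
  by rewrite bb ltxx.
split => //.
- apply: (orthonormal_perm (s := k :: J k :: Jfamily Qn Qk O)).
    by rewrite /Jfamily; perm_by_count.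
  apply: orthonormal_cons => //; first by apply: orthonormal_cons; rewrite ?dotc_Jmap.
  by move=> u; rewrite inE => /predU1P [->|uF] //; exact: Fk.
- by move=> u; rewrite inE => /predU1P [->|/Qn_neg //]; exists b.
Qed.

Lemma Jfamily_cat Qn Qk O : Jfamily Qn Qk O = Jfamily Qn Qk [::] ++ O.
Proof. by rewrite /Jfamily cats0 !catA. Qed.

Lemma admissible_push_fixed Qn Qk f :
  admissible Qn Qk [::] -> dot f f = 1 -> perp (Jfamily Qn Qk [::]) f ->
  A *m f = 0 -> J f = f -> admissible Qn Qk [:: f].
Proof.
move=> [oF Qn_neg Qk_ker _ _] ff Ff Af Jf; split => //; last first.
  by move=> u; rewrite inE => /eqP ->.
apply: (orthonormal_perm (s := f :: Jfamily Qn Qk [::])); last exact: orthonormal_cons.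
by rewrite Jfamily_cat; perm_by_count.
Qed.

Lemma admissible_pair_fixed Qn Qk g f :
  admissible Qn Qk [:: g] -> dot f f = 1 -> perp (Jfamily Qn Qk [:: g]) f ->
  A *m f = 0 -> J f = f -> admissible Qn (normalize (g + 'i *: f) :: Qk) [::].
Proof.
move=> [oF Qn_neg Qk_ker O_fix _] ff Ff Af Jf.
have [Ag Jg] : A *m g = 0 /\ J g = g by apply: O_fix; rewrite inE.
move: oF Ff; rewrite Jfamily_cat; set F0 := Jfamily Qn Qk [::] => oF Ff.
have oF0 : orthonormal F0 := orthonormal_subseq (prefix_subseq _ _) oF.
have F0g : perp F0 g by apply: orthonormal_cat_perp oF _; rewrite inE.
have F0f : perp F0 f by move=> u uF0; apply: Ff; rewrite mem_cat uF0.
have gg : dot g g = 1 by case: oF => _ ->; rewrite ?eqxx // mem_cat mem_head orbT.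
have gf : dot g f = 0 by apply: Ff; rewrite mem_cat mem_head orbT.
have [w_nz wJw] := Jfixed_pair Jg Jf gg ff gf.
set k := normalize _.
have kk : dot k k = 1 by apply: dotc_normalize.
have kJk : dot k (J k) = 0.
  by rewrite Jmap_normalize /normalize dotcZl dotcZr wJw !mulr0.
have F0k : perp F0 k by apply/perpZ/perpD/perpZ.
have F0Jk : perp F0 (J k).
  by rewrite Jmap_normalize JmapD JmapZ Jg Jf; apply/perpZ/perpD/perpZ.
have Ak : A *m k = 0.
  by rewrite -scalemxAr mulmxDr -scalemxAr Ag Af scaler0 addr0 scaler0.
split => //.
- apply: (orthonormal_perm (s := k :: J k :: F0)).
    by rewrite /F0 /Jfamily; perm_by_count.
  apply: orthonormal_cons => //; first by apply: orthonormal_cons; rewrite ?dotc_Jmap.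
  by move=> u; rewrite inE => /predU1P [->|/F0k //]; rewrite dotcC kJk conjC0.
- by move=> u; rewrite inE => /predU1P [->|/Qk_ker].
Qed.

Lemma admissible_grow Qn Qk O :
  admissible Qn Qk O -> (size (Jfamily Qn Qk O) < N + N)%N ->
  exists Qn' Qk' O', admissible Qn' Qk' O' /\
    (size (Jfamily Qn Qk O) < size (Jfamily Qn' Qk' O'))%N.
Proof.
move=> adm lt2N.
have [z [a [z_nz Fz Az]]] : exists z a,
    [/\ z != 0, perp (Jfamily Qn Qk O) z & A *m z = a *: z].
  by apply: perp_stable_eigenvector => // y /(perp_Jfamily_stable adm) [].
have a_real : a \is Num.real.
  by rewrite CrealE (hermitian_eigen_conj (hermitian_ominus hH) z_nz Az).
case: (real_ltgt0P a_real) => [a_gt0|a_lt0|a0].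
- exists (normalize (J z) :: Qn), Qk, O; split; last by rewrite !size_Jfamily /=; lia.
  apply: (admissible_push_negative (b := - a)) => //.
  + by rewrite Jmap_eq0.
  + by case: (perp_Jfamily_stable adm Fz).
  + by rewrite oppr_lt0.
  + by rewrite (ominus_Jmap_eigen hH Az) conj_Creal.
- exists (normalize z :: Qn), Qk, O; split; last by rewrite !size_Jfamily /=; lia.
  exact: (admissible_push_negative (b := a)).
- have Az0 : A *m z = 0 by rewrite Az a0 scale0r.
  have [f [ff Jf Af Ff]] := perp_Jfixed_kernel_vector adm z_nz Fz Az0.
  have [_ _ _ _ O_small] := adm.
  case: O adm O_small Ff {lt2N Fz Az Az0} => [|g [|? ?]] // adm _ Ff.
    exists Qn, Qk, [:: f]; split; first exact: admissible_push_fixed.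
    by rewrite !size_Jfamily /=; lia.
  exists Qn, (normalize (g + 'i *: f) :: Qk), [::].
  split; first exact: admissible_pair_fixed.
  by rewrite !size_Jfamily /=; lia.
Qed.

Lemma admissible_exists k : (k <= N + N)%N ->
  exists Qn Qk O, admissible Qn Qk O /\ (k <= size (Jfamily Qn Qk O))%N.
Proof.
elim: k => [_|k IHk lt_k2N].
  by exists [::], [::], [::]; split => //; split.
have [Qn [Qk [O [adm le_k]]]] := IHk (ltnW lt_k2N).
have [lt_k|le_size] := ltnP k (size (Jfamily Qn Qk O)); first by exists Qn, Qk, O.
have size_k : size (Jfamily Qn Qk O) = k by apply/eqP; rewrite eqn_leq le_size le_k.
have lt_size : (size (Jfamily Qn Qk O) < N + N)%N by rewrite size_k.
have [Qn' [Qk' [O' [adm' grow]]]] := admissible_grow adm lt_size.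
by exists Qn', Qk', O'; rewrite -size_k.
Qed.

(* A family of size [2 size Qn + 2 size Qk + size O = 2N] with [size O <= 1]
   has [O] empty. *)
Lemma admissible_complete :
  exists Qn Qk, admissible Qn Qk [::] /\ (size Qn + size Qk = N)%N.
Proof.
have [Qn [Qk [O [adm le_2N]]]] := admissible_exists (leqnn (N + N)).
have [oF _ _ _ O_small] := adm.
have := orthonormal_size oF; move: le_2N; rewrite size_Jfamily => le_2N ge_2N.
have /size0nil O0 : size O = 0%N by lia.
by exists Qn, Qk; rewrite -O0; split => //; lia.
Qed.

End Construction.

Section JpairBases.
Variables (C : numClosedFieldType) (N : nat).
Local Notation V := 'cV[C]_(N + N).
Local Notation J := (@Jmap C N).
Local Notation dot := (@dotc C N).

Lemma Jpair_lshift l (k : 'I_l -> V) a : Jpair k (lshift l a) = k a.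
Proof. by rewrite /Jpair (unsplitK (inl _ a)). Qed.

Lemma Jpair_rshift l (k : 'I_l -> V) b : Jpair k (rshift l b) = J (k b).
Proof. by rewrite /Jpair (unsplitK (inr _ b)). Qed.

Lemma Jpair_nth (Q : seq V) l (sQ : size Q = l) (i : 'I_(l + l)) :
  Jpair (fun j : 'I_l => nth 0 Q j) i = nth 0 (Q ++ map J Q) i.
Proof.
rewrite /Jpair; case: split_ordP => [a ->|b ->]; rewrite nth_cat /= sQ.
  by rewrite ltn_ord.
by rewrite ltnNge leq_addr /= addKn (nth_map 0) ?sQ.
Qed.

Lemma Jpair_orthonormal (Q : seq V) l (sQ : size Q = l) :
  orthonormal (Q ++ map J Q) -> orthonormal_fam (Jpair (fun j : 'I_l => nth 0 Q j)).
Proof.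
move=> oQ i j; rewrite !(Jpair_nth sQ).
have sQJ : size (Q ++ map J Q) = (l + l)%N by rewrite size_cat size_map sQ.
exact: (orthonormal_nth sQJ oQ).
Qed.

Definition inspan m (w : 'I_m -> V) x := exists d : 'I_m -> C, x = \sum_j d j *: w j.

Lemma inspanD m (w : 'I_m -> V) x y : inspan w x -> inspan w y -> inspan w (x + y).
Proof.
move=> [d1 ->] [d2 ->]; exists (fun j => d1 j + d2 j).
by rewrite -big_split; apply: eq_bigr => j _; rewrite scalerDl.
Qed.

Lemma inspanZ m (w : 'I_m -> V) c x : inspan w x -> inspan w (c *: x).
Proof.
move=> [d ->]; exists (fun j => c * d j).
by rewrite scaler_sumr; apply: eq_bigr => j _; rewrite scalerA.
Qed.

Lemma inspan_mem m (w : 'I_m -> V) j : inspan w (w j).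
Proof.
exists (fun k => (k == j)%:R); rewrite (bigD1 j) //= big1 ?eqxx ?scale1r ?addr0 //.
by move=> k /negPf ->; rewrite scale0r.
Qed.

Lemma spans_trans m m' (v : 'I_m -> V) (w : 'I_m' -> V) S :
  spans v S -> (forall i, inspan w (v i)) -> spans w S.
Proof.
move=> vS vw x Sx; have [c ->] := vS x Sx.
apply: (big_ind (inspan w)) => [|y z|i _]; [|exact: inspanD|exact/inspanZ/vw].
by exists (fun _ => 0); rewrite big1 // => j _; rewrite scale0r.
Qed.

Section JfixedMix.
Variables (l : nat) (k : 'I_l -> V).
Hypothesis ok : orthonormal_fam (Jpair k).
Local Notation v := (Jpair k).

Definition Jfixed_mix (i : 'I_(l + l)) : V :=
  match split i with
  | inl a => v (lshift l a) + v (rshift l a)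
  | inr b => 'i *: (v (lshift l b) - v (rshift l b))
  end.

Lemma dotc_Jfixed_mix i j : dot (Jfixed_mix i) (Jfixed_mix j) = 2%:R * (i == j)%:R.
Proof.
have ii t : 'i^* * ('i * t) = t :> C.
  by rewrite conjCi mulNr mulrA mulCii mulN1r opprK.
rewrite /Jfixed_mix; case: split_ordP => a ->; case: split_ordP => b ->;
  rewrite ?dotcZl ?dotcZr ?ii !(dotcDl, dotcDr, dotcNl, dotcNr) !ok !eq_shift;
  case: eqP => _;
  by rewrite /= ?mulr1n ?mulr0n ?oppr0 ?mulr0 ?mulr1 ?subrr ?addr0 ?add0r ?subr0
    ?sub0r ?opprK ?mulr0 ?subrr ?addrN ?mulr0.
Qed.

Lemma Jfixed_mix_neq0 i : Jfixed_mix i != 0.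
Proof. by rewrite -dotc_eq0 dotc_Jfixed_mix eqxx mulr1 pnatr_eq0. Qed.

Lemma Jfixed_mix_orthogonal : orthogonal_fam Jfixed_mix.
Proof. by move=> i j nij; rewrite dotc_Jfixed_mix (negPf nij) mulr0. Qed.

Lemma Jmap_Jfixed_mix i : J (Jfixed_mix i) = Jfixed_mix i.
Proof.
rewrite /Jfixed_mix; case: split_ordP => a _; rewrite Jpair_lshift Jpair_rshift.
  by rewrite JmapD JmapK addrC.
by rewrite JmapZ JmapB JmapK conjCi scaleNr -scalerN opprB.
Qed.

Lemma Jpair_inspan_Jfixed_mix i : inspan Jfixed_mix (v i).
Proof.
have mix_l a : Jfixed_mix (lshift l a) = v (lshift l a) + v (rshift l a).
  by rewrite /Jfixed_mix (unsplitK (inl _ a)).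
have mix_r a : Jfixed_mix (rshift l a) = 'i *: (v (lshift l a) - v (rshift l a)).
  by rewrite /Jfixed_mix (unsplitK (inr _ a)).
have half_double (x : V) : 2^-1 *: (x + x) = x.
  by rewrite -mulr2n -scaler_nat scalerA mulVf ?scale1r // pnatr_eq0.
have mulNii : (- 'i) * 'i = 1 :> C by rewrite mulNr mulCii opprK.
case: (split_ordP i) => a ->.
  have -> : v (lshift l a) =
      2^-1 *: (Jfixed_mix (lshift l a) + (- 'i) *: Jfixed_mix (rshift l a)).
    by rewrite mix_l mix_r scalerA mulNii scale1r addrACA subrr addr0 half_double.
  by apply/inspanZ/inspanD; [|apply: inspanZ]; apply: inspan_mem.
have -> : v (rshift l a) =
    2^-1 *: (Jfixed_mix (lshift l a) + 'i *: Jfixed_mix (rshift l a)).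
  rewrite mix_l mix_r scalerA mulCii scaleN1r opprB addrCA.
  by rewrite (addrC (v (lshift l a))) addrK half_double.
by apply/inspanZ/inspanD; [|apply: inspanZ]; apply: inspan_mem.
Qed.

Lemma Jfixed_mix_basis (A : 'M[C]_(N + N)) :
  is_basis (Jpair k) (in_ker A) -> is_basis Jfixed_mix (in_ker A).
Proof.
move=> [kA _ kspan]; split.
- move=> i; rewrite /in_ker /Jfixed_mix; case: split_ordP => a _.
    by rewrite mulmxDr !kA addr0.
  by rewrite -scalemxAr mulmxBr !kA subr0 scaler0.
- exact: orthogonal_fam_free Jfixed_mix_orthogonal Jfixed_mix_neq0.
- exact: spans_trans kspan Jpair_inspan_Jfixed_mix.
Qed.

End JfixedMix.
End JpairBases.

Section FinalFamily.
Variables (C : numClosedFieldType) (N : nat) (H : 'M[C]_(N + N)).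
Hypothesis hH : hermitian_mx H.
Local Notation V := 'cV[C]_(N + N).
Local Notation J := (@Jmap C N).
Local Notation dot := (@dotc C N).
Local Notation A := (ominus H).
Variables Qn Qk : seq V.
Hypotheses (adm : admissible H Qn Qk [::]) (sizeN : (size Qn + size Qk = N)%N).
Local Notation kerv := (fun j : 'I_(size Qk) => nth 0 Qk j).

Lemma admissible_expand x : x = \sum_(u <- Jfamily Qn Qk [::]) dot u x *: u.
Proof.
have [oF _ _ _ _] := adm.
by apply: orthonormal_expand => //; rewrite size_Jfamily /=; lia.
Qed.

Lemma admissible_kernel_basis :
  is_basis (Jpair kerv) (in_ker A) /\ orthonormal_fam (Jpair kerv).
Proof.
have [oF Qn_neg Qk_ker _ _] := adm; have hA := hermitian_ominus hH.
have oK : orthonormal (Qk ++ map J Qk).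
  by apply: orthonormal_subseq oF; rewrite /Jfamily cats0 catA suffix_subseq.
have okerv := Jpair_orthonormal (erefl _) oK.
split => //; split; [|exact: orthonormal_fam_free okerv|].
- move=> i; rewrite (Jpair_nth (erefl _)) /in_ker.
  have := mem_nth 0 (_ : (i < size (Qk ++ map J Qk))%N).
  rewrite size_cat size_map => /(_ (ltn_ord i)); rewrite mem_cat.
  case/orP => [/Qk_ker //|/mapP [x /Qk_ker Ax ->]].
  by rewrite ominus_Jmap // Ax Jmap0 oppr0.
- move=> y Ay; exists (fun i => dot (Jpair kerv i) y).
  rewrite {1}(admissible_expand y) /Jfamily cats0 !big_cat /=.
  rewrite big1_seq => [|u /andP [_ uQn]]; last first.
    have [lam lam_lt0 Au] := Qn_neg u uQn.
    by rewrite (hermitian_eigen_ker_orth hA Au (ltr0_neq0 lam_lt0) Ay) scale0r.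
  rewrite big1_seq => [|u /andP [_ /mapP [x xQn ->]]]; last first.
    have [lam lam_lt0 Ax] := Qn_neg x xQn.
    rewrite (hermitian_eigen_ker_orth hA (ominus_Jmap_eigen hH Ax)) ?scale0r //.
    by rewrite oppr_eq0 conjC_eq0 ltr0_neq0.
  rewrite !add0r -big_cat (big_nth 0) big_mkord size_cat size_map.
  by apply: eq_bigr => i _; rewrite (Jpair_nth (erefl _)).
Qed.

Lemma admissible_eigenbasis :
  exists x : 'I_N -> V,
  [/\ is_basis (Jpair x) (fun _ => True),
      orthonormal_fam (Jpair x),
      (forall i, exists mu : C, A *m Jpair x i = mu *: Jpair x i) &
      (forall j, exists lam : C, lam <= 0 /\ A *m x j = lam *: x j)].
Proof.
exists (fun j : 'I_N => nth 0 (Qn ++ Qk) j); set x := (fun j => _).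
have [oF Qn_neg Qk_ker _ _] := adm.
have sQ : size (Qn ++ Qk) = N by rewrite size_cat.
have permQ : perm_eq (Jfamily Qn Qk [::]) ((Qn ++ Qk) ++ map J (Qn ++ Qk)).
  by rewrite /Jfamily map_cat; perm_by_count.
have ox : orthonormal_fam (Jpair x) by apply/(Jpair_orthonormal sQ)/(orthonormal_perm permQ).
split => //.
- split => //; first exact: orthonormal_fam_free.
  by move=> y _; exists (fun i => dot (Jpair x i) y); apply: orthonormal_fam_expand.
- move=> i; apply: (Jfamily_eigen hH adm).
  by rewrite (perm_mem permQ) (Jpair_nth sQ) mem_nth // size_cat size_map sQ.
- move=> j; have : x j \in Qn ++ Qk by rewrite mem_nth // sQ.
  rewrite mem_cat => /orP [/Qn_neg [lam /ltW lam_le0 Axj]|/Qk_ker Axj].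
    by exists lam.
  by exists 0; rewrite scale0r.
Qed.

End FinalFamily.

Unset Implicit Arguments.
Local Open Scope complex_scope.

Theorem mainTheorem8 (R : realType) (N : nat) (H : 'M[R[i]]_(N + N)) :
  hermitian_mx H ->
  let Hm := ominus H in
  let K := in_ker Hm in
  [/\ (* K is J-invariant *)
      (forall x, K x -> K (Jmap x)),
      (* dim K = 2l, with an orthogonal basis of nonzero J-fixed vectors and
         an orthonormal basis {k'_1..k'_l, J k'_1 .. J k'_l} *)
      (exists l : nat,
        [/\ \rank (kerc Hm) = (l + l)%N,
            (exists y : 'I_(l + l) -> 'cV[R[i]]_(N + N),
               [/\ is_basis y K, orthogonal_fam y,
                   forall k, y k != 0 & forall k, Jmap (y k) = y k]) &
            (exists k' : 'I_l -> 'cV[R[i]]_(N + N),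
               is_basis (Jpair k') K /\ orthonormal_fam (Jpair k'))]) &
      (* orthonormal eigenbasis {x_1..x_N, J x_1 .. J x_N} of C^{2N} for Hm,
         with every x_j having eigenvalue <= 0 *)
      (exists x : 'I_N -> 'cV[R[i]]_(N + N),
        [/\ is_basis (Jpair x) (fun _ => True),
            orthonormal_fam (Jpair x),
            (forall i, exists mu : R[i], Hm *m Jpair x i = mu *: Jpair x i) &
            (forall j, exists lam : R[i], lam <= 0 /\ Hm *m x j = lam *: x j)])].
Proof.
move=> hH Hm K; rewrite {}/K {}/Hm.
have [Qn [Qk [adm sizeN]]] := admissible_complete hH.
have [kerB kerO] := admissible_kernel_basis hH adm sizeN.
split.
- exact: ker_ominus_Jmap.
- exists (size Qk); split.
  + exact: rank_kerc_orthonormal_basis kerB kerO.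
  + exists (Jfixed_mix (fun j : 'I_(size Qk) => nth 0 Qk j)); split.
    * exact: (Jfixed_mix_basis kerO kerB).
    * exact: Jfixed_mix_orthogonal.
    * exact: Jfixed_mix_neq0.
    * exact: Jmap_Jfixed_mix.
  + by exists (fun j : 'I_(size Qk) => nth 0 Qk j).
- exact: (admissible_eigenbasis hH adm sizeN).
Qed.
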